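(* The $\Re$-module $R_d(a,b,c)$ is isomorphic to $R_d(-a-1,b,c)$. Moreover, setting $w_i=\prod_{h=0}^{i-1}(A-\theta_{d-h})v_0$ for $0\le i\le d$, the vectors $w_0,\dots,w_d$ form a basis of $R_d(a,b,c)$ with $Aw_i=\theta_{d-i}w_i+w_{i+1}$ (with $w_{d+1}=0$) and $Bw_i=\theta_i^*w_i+\phi_iw_{i-1}$ (with $w_{-1}=0$) for $0\le i\le d$, where $\phi_i=i(i-d-1)(a-b+c-\tfrac d2+i)(a-b-c-\tfrac d2+i-1)$.
   Context: $\mathbb F$ is algebraically closed with $\operatorname{char}\mathbb F\ne2$. The Racah algebra $\Re$ is the unital associative $\mathbb F$-algebra with generators $A,B,C,D$ and relations $[A,B]=[B,C]=[C,A]=2D$ together with the requirement that each of $\alpha:=[A,D]+AC-BA$, $\beta:=[B,D]+BA-CB$, $\gamma:=[C,D]+CB-AC$ is central in $\Re$; $\delta:=A+B+C$. For $a,b,c\in\mathbb F$ and $d\in\mathbb N$ set $\theta_i=(a+\tfrac d2-i)(a+\tfrac d2-i+1)$, $\theta_i^*=(b+\tfrac d2-i)(b+\tfrac d2-i+1)$, $\varphi_i=i(i-d-1)(a+b+c+\tfrac d2-i+2)(a+b-c+\tfrac d2-i+1)$. $R_d(a,b,c)$ denotes the $(d+1)$-dimensional $\Re$-module with a basis $v_0,\dots,v_d$ such that $Av_i=\theta_iv_i+v_{i+1}$ ($v_{d+1}=0$), $Bv_i=\theta_i^*v_i+\varphi_iv_{i-1}$ ($v_{-1}=0$), and $\alpha,\beta,\delta$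 act as the scalars $(c-b)(c+b+1)(a-\tfrac d2)(a+\tfrac d2+1)$, $(a-c)(a+c+1)(b-\tfrac d2)(b+\tfrac d2+1)$, $\tfrac d2(\tfrac d2+1)+a(a+1)+b(b+1)+c(c+1)$ respectively (exists, unique up to isomorphism). *)

From HB Require Import structures.
From mathcomp Require Import all_boot all_order all_algebra all_field.
Set Implicit Arguments. Unset Strict Implicit. Unset Printing Implicit Defensive.
Import Order.TTheory GRing.Theory Num.Theory.
Local Open Scope ring_scope.

(* Conventions: a (d+1)-dimensional Racah-algebra module is given by the four
   matrices (acting on column vectors 'cV_(d.+1), i.e. v |-> M *m v) by which
   the generators A, B, C, D act.  The basis vector v_i is the i-th standard
   column vector, so column i of a matrix is the image of v_i. *)


Definition mxcomm (F : fieldType) (n : nat) (X Y : 'M[F]_n) : 'M[F]_n :=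
  X *m Y - Y *m X.

Definition racah_module (F : fieldType) (n : nat)
    (A B C D : 'M[F]_n) : Prop :=
  let alpha := mxcomm A D + A *m C - B *m A in
  let beta  := mxcomm B D + B *m A - C *m B in
  let gamma := mxcomm C D + C *m B - A *m C in
  [/\ mxcomm A B = 2%:R *: D, mxcomm B C = 2%:R *: D, mxcomm C A = 2%:R *: D &
      forall Z, Z \in [:: alpha; beta; gamma] ->
        forall X, X \in [:: A; B; C; D] -> mxcomm Z X = 0].

Definition half (F : fieldType) (d : nat) : F := d%:R / 2%:R.

Definition theta (F : fieldType) (a : F) (d i : nat) : F :=
  (a + half F d - i%:R) * (a + half F d - i%:R + 1).

Definition varphi (F : fieldType) (a b c : F) (d i : nat) : F :=
  i%:R * (i%:R - d%:R - 1) * (a + b + c + half F d - i%:R + 2%:R)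
       * (a + b - c + half F d - i%:R + 1).

Definition phi (F : fieldType) (a b c : F) (d i : nat) : F :=
  i%:R * (i%:R - d%:R - 1) * (a - b + c - half F d + i%:R)
       * (a - b - c - half F d + i%:R - 1).

(* scalar by which delta = A + B + C acts *)
Definition delta_val (F : fieldType) (a b c : F) (d : nat) : F :=
  half F d * (half F d + 1) + a * (a + 1) + b * (b + 1) + c * (c + 1).

Definition RA (F : fieldType) (a b c : F) (d : nat) : 'M[F]_(d.+1) :=
  \matrix_(i, j) (if i == j :> nat then theta a d j
                  else if i == j.+1 :> nat then 1 else 0).

Definition RB (F : fieldType) (a b c : F) (d : nat) : 'M[F]_(d.+1) :=
  \matrix_(i, j) (if i == j :> nat then theta b d j
                  else if i.+1 == j :> nat then varphi a b c d j else 0).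

Definition RC (F : fieldType) (a b c : F) (d : nat) : 'M[F]_(d.+1) :=
  (delta_val a b c d)%:M - RA a b c d - RB a b c d.

Definition RD (F : fieldType) (a b c : F) (d : nat) : 'M[F]_(d.+1) :=
  (2%:R)^-1 *: mxcomm (RA a b c d) (RB a b c d).

Definition racah_iso (F : fieldType) (n : nat)
    (A1 B1 C1 D1 A2 B2 C2 D2 : 'M[F]_n) : Prop :=
  exists P : 'M[F]_n, [/\ P \in unitmx, P *m A1 = A2 *m P, P *m B1 = B2 *m P,
                          P *m C1 = C2 *m P & P *m D1 = D2 *m P].

Definition Rd_iso (F : fieldType) (d : nat) (a b c a' b' c' : F) : Prop :=
  racah_iso (RA a b c d) (RB a b c d) (RC a b c d) (RD a b c d)
            (RA a' b' c' d) (RB a' b' c' d) (RC a' b' c' d) (RD a' b' c' d).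

Definition v0 (F : fieldType) (d : nat) : 'cV[F]_(d.+1) := delta_mx 0 0.

Definition wvec (F : fieldType) (a b c : F) (d i : nat) : 'cV[F]_(d.+1) :=
  (\prod_(h < i) (RA a b c d - (theta a d (d - h))%:M)) *m v0 F d.

Definition Wmx (F : fieldType) (a b c : F) (d : nat) : 'M[F]_(d.+1) :=
  \matrix_(i, j) wvec a b c d j i 0.

(* The matrices of A and B on R_d(a,b,c) satisfy the cubic relation
   [A,[A,B]] = 2(AB + BA) + 2A^2 - 2 delta A + 2 alpha (that is, 2[A,D] =
   2(alpha - AC + BA) with C = delta - A - B), checked directly on the basis
   v_i.  The vectors w_i are unitriangular in the v_i, w_(d+1) = 0 by
   Cayley-Hamilton, and A w_i = theta_(d-i) w_i + w_(i+1), where theta_(d-i) is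
   theta_i for the parameter -a-1.  As delta and alpha are invariant under
   a |-> -a-1, expanding the cubic relation on w_i yields B w_(i+2) from B w_i
   and B w_(i+1), exactly as on the v_i of R_d(-a-1,b,c); so B acts on the w_i
   as on that basis, with varphi(-a-1) = phi, and the change of basis to the
   w_i intertwines R_d(-a-1,b,c) with R_d(a,b,c). *)

From Pilot Require Import Defs.
From HB Require Import structures.
From mathcomp Require Import all_boot all_order all_algebra all_field.
From mathcomp Require Import ring zify.
Set Implicit Arguments. Unset Strict Implicit. Unset Printing Implicit Defensive.
Import Order.TTheory GRing.Theory Num.Theory.
Local Open Scope ring_scope.

Section CubicRelation.

Variables (F : fieldType) (n : nat).

Definition racah_cubic (A B : 'M[F]_n) (del al : F) : 'M[F]_n :=
  mxcomm A (mxcomm A B) - 2%:R *: (A *m B + B *m A) - 2%:R *: (A *m A)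
  + (2%:R * del) *: A - (2%:R * al)%:M.

(* Only the coefficient of [B *m u3] survives the expansion of the cubic relation
   on [u1] once the four scalar identities hold. *)
Lemma racah_cubic_chainP (A B : 'M[F]_n) (z u1 u2 u3 : 'cV[F]_n)
    (t0 t1 t2 s1 s2 s3 p1 p2 p3 del al : F) :
  A *m z = t0 *: z + p1 *: u1 ->
  A *m u1 = t1 *: u1 + u2 ->
  A *m u2 = t2 *: u2 + u3 ->
  B *m u1 = s1 *: u1 + z ->
  B *m u2 = s2 *: u2 + p2 *: u1 ->
  (t0 - t1) ^+ 2 = 2%:R * (t0 + t1) ->
  p1 * (t0 - t1 - 2%:R) + p2 * (t2 - t1 - 2%:R)
    = 2%:R * (2%:R * s1 * t1 + t1 ^+ 2 - del * t1 + al) ->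
  p1 - 2%:R * p2 + p3
    = (s1 - s2) * (t1 - t2) + 2%:R * (s1 + s2 + t1 + t2 - del) ->
  s1 - 2%:R * s2 + s3 = 2%:R ->
  racah_cubic A B del al *m u1 = 0 <-> B *m u3 = s3 *: u3 + p3 *: u2.
Proof.
move=> Az Au1 Au2 Bu1 Bu2 e0 e1 e2 e3.
have expand : racah_cubic A B del al *m u1 - (B *m u3 - (s3 *: u3 + p3 *: u2)) =
    ((t0 - t1) ^+ 2 - 2%:R * (t0 + t1)) *: z
  + (p1 * (t0 - t1 - 2%:R) + p2 * (t2 - t1 - 2%:R)
     - 2%:R * (2%:R * s1 * t1 + t1 ^+ 2 - del * t1 + al)) *: u1
  + (p1 - 2%:R * p2 + p3
     - ((s1 - s2) * (t1 - t2) + 2%:R * (s1 + s2 + t1 + t2 - del))) *: u2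
  + (s1 - 2%:R * s2 + s3 - 2%:R) *: u3.
  rewrite /racah_cubic /mxcomm.
  do ![rewrite mulmxDl | rewrite mulmxBl | rewrite mulmxDr | rewrite mulmxBr
      | rewrite mulNmx | rewrite mulmxN | rewrite mul_scalar_mx
      | rewrite -scalemxAl | rewrite -scalemxAr | rewrite -mulmxA
      | rewrite Az | rewrite Au1 | rewrite Au2 | rewrite Bu1 | rewrite Bu2].
  set Bu3 := B *m u3.
  by apply/matrixP => i j; rewrite !mxE; ring.
move: expand; rewrite e0 e1 e2 e3 !subrr !scale0r !addr0 => /eqP.
rewrite subr_eq0 => /eqP ->.
by split=> [/eqP|->]; rewrite ?subrr // subr_eq0 => /eqP.
Qed.

End CubicRelation.

Lemma natr_half (F : fieldType) (d : nat) :
  (2%:R : F) != 0 -> d%:R = 2%:R * Defs.half F d.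
Proof. by move=> two_neq0; rewrite /Defs.half mulrC divfK. Qed.

(* [theta] and [varphi] as polynomials in the index, so that the index can be
   shifted inside [F]: [theta a d i] is [theta_at a d i%:R] by definition. *)
Definition theta_at (F : fieldType) (a : F) (d : nat) (x : F) : F :=
  (a + Defs.half F d - x) * (a + Defs.half F d - x + 1).

Definition varphi_at (F : fieldType) (a b c : F) (d : nat) (x : F) : F :=
  x * (x - d%:R - 1) * (a + b + c + Defs.half F d - x + 2%:R)
    * (a + b - c + Defs.half F d - x + 1).

Definition alpha_val (F : fieldType) (a b c : F) (d : nat) : F :=
  (c - b) * (c + b + 1) * (a - Defs.half F d) * (a + Defs.half F d + 1).

Lemma delta_val_opp (F : fieldType) (a b c : F) d :
  delta_val (- a - 1) b c d = delta_val a b c d.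
Proof. by rewrite /delta_val; ring. Qed.

Lemma alpha_val_opp (F : fieldType) (a b c : F) d :
  alpha_val (- a - 1) b c d = alpha_val a b c d.
Proof. by rewrite /alpha_val; ring. Qed.

Lemma phi_varphi_opp (F : fieldType) (a b c : F) d i :
  phi a b c d i = varphi (- a - 1) b c d i.
Proof. by rewrite /phi /varphi; ring. Qed.

Section RacahChain.

Variables (F : fieldType) (n : nat) (A B : 'M[F]_n) (a b c : F) (d : nat).
Variable u : nat -> 'cV[F]_n.
Hypothesis two_neq0 : (2%:R : F) != 0.
Hypothesis A_chain : forall k, A *m u k = theta_at a d k%:R *: u k + u k.+1.

Let B_acts k :=
  B *m u k = theta_at b d k%:R *: u k + varphi_at a b c d k%:R *: u k.-1.

Let cubic := racah_cubic A B (delta_val a b c d) (alpha_val a b c d).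

Lemma racah_chain_cubicP k :
  B_acts k -> B_acts k.+1 -> cubic *m u k = 0 <-> B_acts k.+2.
Proof.
move=> Bk Bk1.
have A_pred : A *m (varphi_at a b c d k%:R *: u k.-1)
    = theta_at a d (k%:R - 1) *: (varphi_at a b c d k%:R *: u k.-1)
      + varphi_at a b c d k%:R *: u k.
  case: k {Bk Bk1} => [|k].
    (* the prefactor [varphi_at _ 0] vanishes *)
    by rewrite /varphi_at !mul0r !scale0r mulmx0 scaler0 add0r.
  by rewrite -scalemxAr A_chain -natr1 addrK scalerDr !scalerA mulrC.
apply: racah_cubic_chainP A_pred (A_chain k) (A_chain k.+1) Bk Bk1 _ _ _ _;
  rewrite /theta_at /varphi_at /delta_val /alpha_val ?(natr_half d two_neq0);
  ring.
Qed.

Lemma racah_chain_B_acts :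
  cubic = 0 -> B_acts 0 -> B_acts 1 -> forall k, B_acts k.
Proof.
move=> cubic0 B0 B1.
suff B_acts2 k : B_acts k /\ B_acts k.+1 by move=> k; case: (B_acts2 k).
elim: k => [|k [Bk Bk1]]; split=> //.
by apply/(racah_chain_cubicP Bk Bk1); rewrite cubic0 mul0mx.
Qed.

Lemma racah_chain_cubic : (forall k, B_acts k) -> forall k, cubic *m u k = 0.
Proof. by move=> Bu k; apply/(racah_chain_cubicP (Bu k) (Bu k.+1)). Qed.

End RacahChain.

(* [v_j] for every [j : nat]; it is [0] for [j > d], which lets the index run
   past the top of the basis. *)
Definition basis_vec (F : fieldType) (d j : nat) : 'cV[F]_d.+1 :=
  \col_(i < d.+1) ((i : nat) == j)%:R.

Section BasisVectors.

Variables (F : fieldType) (a b c : F) (d : nat).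

Lemma basis_vec0 : basis_vec F d 0 = v0 F d.
Proof. by apply/matrixP => i k; rewrite !mxE (ord1 k) eqxx andbT. Qed.

Lemma mulmx_basis_vec (M : 'M[F]_d.+1) j i :
  (M *m basis_vec F d j) i 0 = if (j < d.+1)%N then M i (inord j) else 0.
Proof.
rewrite mxE; case: ltnP => hj.
  rewrite (bigD1 (inord j)) //= mxE inordK // eqxx mulr1 big1 ?addr0 // => k.
  by rewrite mxE -val_eqE /= inordK //; case: eqP => // _; rewrite mulr0.
apply: big1 => k _; rewrite mxE; case: eqP => [k_j|]; last by rewrite mulr0.
by move: (ltn_ord k); lia.
Qed.

Lemma mx_eq_basis (M N : 'M[F]_d.+1) :
  (forall j, M *m basis_vec F d j = N *m basis_vec F d j) -> M = N.
Proof.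
move=> MN; apply/matrixP => i j.
have := congr1 (fun v : 'cV[F]_d.+1 => v i 0) (MN j).
by rewrite !mulmx_basis_vec ltn_ord inord_val.
Qed.

Lemma varphi0 : varphi a b c d 0 = 0.
Proof. by rewrite /varphi !mul0r. Qed.

Lemma varphiSd : varphi a b c d d.+1 = 0.
Proof.
by rewrite /varphi -natr1 [_ + 1 - _]addrAC subrr add0r subrr mulr0 !mul0r.
Qed.

Lemma RA_basis j :
  RA a b c d *m basis_vec F d j
    = theta a d j *: basis_vec F d j + basis_vec F d j.+1.
Proof.
apply/matrixP => i k; rewrite (ord1 k) mulmx_basis_vec.
have hi := ltn_ord i; case: ltnP => hj; rewrite !mxE ?inordK //.
all: by case: eqP; case: eqP => /=; rewrite ?mulr1 ?mulr0 ?addr0 ?add0r //; lia.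
Qed.

Lemma RB_basis j :
  RB a b c d *m basis_vec F d j
    = theta b d j *: basis_vec F d j + varphi a b c d j *: basis_vec F d j.-1.
Proof.
apply/matrixP => i k; rewrite (ord1 k) mulmx_basis_vec.
have hi := ltn_ord i; case: ltnP => hj; rewrite !mxE ?inordK //.
  case h1: (i == j :> nat); case h2: (i.+1 == j); case h3: (i == j.-1 :> nat);
    rewrite /= ?mulr1 ?mulr0 ?addr0 ?add0r //; try lia.
  have -> : j = 0%N by lia.
  by rewrite varphi0 addr0.
case h1: (i == j :> nat); case h3: (i == j.-1 :> nat);
  rewrite /= ?mulr1 ?mulr0 ?addr0 ?add0r //; try lia.
have -> : j = d.+1 by lia.
by rewrite varphiSd.
Qed.

Hypothesis two_neq0 : (2%:R : F) != 0.

Lemma racah_cubic_Rd :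
  racah_cubic (RA a b c d) (RB a b c d)
              (delta_val a b c d) (alpha_val a b c d) = 0.
Proof.
apply: mx_eq_basis => j; rewrite mul0mx.
exact: (racah_chain_cubic two_neq0 RA_basis RB_basis).
Qed.

End BasisVectors.

Lemma theta_rev (F : fieldType) (a : F) d k : (2%:R : F) != 0 -> (k <= d)%N ->
  theta a d (d - k) = theta_at (- a - 1) d k%:R.
Proof.
move=> two_neq0 kd.
by rewrite /theta /theta_at natrB // (natr_half d two_neq0); ring.
Qed.

Definition wpoly (F : fieldType) (a : F) (d j : nat) : {poly F} :=
  \prod_(h < j) ('X - (theta a d (d - h))%:P).

Section WBasis.

Variables (F : fieldType) (a b c : F) (d : nat).

Local Notation w := (wvec a b c d).

Lemma wvecE j : w j = horner_mx (RA a b c d) (wpoly a d j) *m v0 F d.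
Proof.
rewrite /wvec /wpoly rmorph_prod; congr (_ *m _); apply: eq_bigr => h _.
by rewrite rmorphB /= horner_mx_X horner_mx_C.
Qed.

Lemma wvec0 : w 0 = basis_vec F d 0.
Proof. by rewrite /wvec big_ord0 mul1mx basis_vec0. Qed.

Lemma wvecS j : w j.+1 = (RA a b c d - (theta a d (d - j))%:M) *m w j.
Proof.
rewrite !wvecE /wpoly big_ord_recr /= mulrC rmorphM /= -mulmxE -mulmxA.
by rewrite rmorphB /= horner_mx_X horner_mx_C.
Qed.

Lemma RA_wvec j : RA a b c d *m w j = theta a d (d - j) *: w j + w j.+1.
Proof. by rewrite wvecS mulmxBl mul_scalar_mx addrC subrK. Qed.

Lemma wpoly_char : wpoly a d d.+1 = char_poly (RA a b c d).
Proof.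
rewrite char_poly_trig; last first.
  apply/is_trig_mxP => i j ij; rewrite mxE.
  by case: eqP => [|_]; [lia | case: eqP => //; lia].
rewrite /wpoly (reindex_inj rev_ord_inj) /=; apply: eq_bigr => i _.
by rewrite mxE eqxx subSS subKn // -ltnS.
Qed.

Lemma wvecSd : w d.+1 = 0.
Proof. by rewrite wvecE wpoly_char Cayley_Hamilton mul0mx. Qed.

Lemma wvec_eq0 k : (d < k)%N -> w k = 0.
Proof.
move=> /subnKC <-; elim: (k - d.+1)%N => [|m IH]; first by rewrite addn0 wvecSd.
by rewrite addnS wvecS IH mulmx0.
Qed.

Lemma wvec_unitri j (k : 'I_d.+1) : (j <= k)%N -> w j k 0 = ((k : nat) == j)%:R.
Proof.
elim: j k => [|j IH] k jk; first by rewrite wvec0 mxE.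
have RA_wj : (RA a b c d *m w j) k 0 = (RA a b c d *m basis_vec F d j) k 0.
  rewrite !mxE; apply: eq_bigr => m _; have [jm|mj] := leqP j m.
    by rewrite (IH m jm) [basis_vec _ _ _ _ _]mxE.
  have -> : RA a b c d k m = 0 by rewrite mxE !ifF //; apply/eqP; lia.
  by rewrite !mul0r.
rewrite wvecS mulmxBl mul_scalar_mx mxE RA_wj RA_basis.
rewrite [X in _ + X]mxE [X in - X]mxE (IH k); last lia.
have /negbTE k_neq_j : (k : nat) != j by apply/eqP; lia.
by rewrite !mxE k_neq_j !mulr0 subr0 add0r.
Qed.

Lemma Wmx_unit : Wmx a b c d \in unitmx.
Proof.
rewrite unitmxE -det_tr det_trig; last first.
  apply/is_trig_mxP => i j ij.
  rewrite mxE [Wmx _ _ _ _ _ _]mxE wvec_unitri; last lia.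
  by rewrite (_ : (j : nat) == i = false) //; apply/eqP; lia.
rewrite big1 ?unitr1 // => i _.
by rewrite mxE [Wmx _ _ _ _ _ _]mxE wvec_unitri // eqxx.
Qed.

Lemma Wmx_basis j : Wmx a b c d *m basis_vec F d j = w j.
Proof.
apply/matrixP => i k; rewrite (ord1 k) mulmx_basis_vec mxE.
by case: ltnP => jd; [rewrite inordK | rewrite wvec_eq0 ?mxE].
Qed.

End WBasis.

Section Intertwining.

Variables (F : fieldType) (a b c : F) (d : nat).
Hypothesis two_neq0 : (2%:R : F) != 0.

Local Notation w := (wvec a b c d).

Lemma RA_wvec_opp k :
  RA a b c d *m w k = theta_at (- a - 1) d k%:R *: w k + w k.+1.
Proof.
case: (leqP k d) => kd; first by rewrite RA_wvec theta_rev.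
by rewrite !wvec_eq0 ?mulmx0 ?scaler0 ?addr0 //; lia.
Qed.

(* [w] is an A-chain for the parameter [- a - 1], and [R_d(a,b,c)] satisfies the
   cubic relation of that parameter. *)
Lemma RB_wvec k :
  RB a b c d *m w k = theta b d k *: w k + phi a b c d k *: w k.-1.
Proof.
rewrite phi_varphi_opp.
have w1E : w 1 = (theta a d 0 - theta a d d) *: basis_vec F d 0 + basis_vec F d 1.
  rewrite wvecS wvec0 mulmxBl mul_scalar_mx RA_basis subn0.
  by apply/matrixP => i j; rewrite !mxE; ring.
apply: (racah_chain_B_acts two_neq0 RA_wvec_opp).
- by rewrite delta_val_opp alpha_val_opp racah_cubic_Rd.
- by rewrite wvec0 RB_basis varphi0 /varphi_at !mul0r !scale0r.
rewrite w1E wvec0 mulmxDr -!scalemxAr !RB_basis.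
apply/matrixP => i j; rewrite !mxE /theta /theta_at /varphi /varphi_at.
by rewrite (natr_half d two_neq0); ring.
Qed.

Lemma Wmx_RA : Wmx a b c d *m RA (- a - 1) b c d = RA a b c d *m Wmx a b c d.
Proof.
apply: mx_eq_basis => j.
by rewrite -!mulmxA RA_basis mulmxDr -scalemxAr !Wmx_basis RA_wvec_opp.
Qed.

Lemma Wmx_RB : Wmx a b c d *m RB (- a - 1) b c d = RB a b c d *m Wmx a b c d.
Proof.
apply: mx_eq_basis => j.
rewrite -!mulmxA RB_basis mulmxDr -!scalemxAr !Wmx_basis RB_wvec.
by rewrite phi_varphi_opp.
Qed.

Lemma Wmx_RC : Wmx a b c d *m RC (- a - 1) b c d = RC a b c d *m Wmx a b c d.
Proof.
rewrite /RC delta_val_opp !mulmxBr !mulmxBl mul_mx_scalar mul_scalar_mx.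
by rewrite Wmx_RA Wmx_RB.
Qed.

Lemma Wmx_RD : Wmx a b c d *m RD (- a - 1) b c d = RD a b c d *m Wmx a b c d.
Proof.
rewrite /RD /mxcomm -scalemxAr -scalemxAl mulmxBr mulmxBl !mulmxA Wmx_RA Wmx_RB.
by rewrite -!mulmxA Wmx_RA Wmx_RB.
Qed.

End Intertwining.

Lemma invmx_intertwine (R : comUnitRingType) n (W X Y : 'M[R]_n.+1) :
  W \in unitmx -> W *m Y = X *m W -> invmx W *m X = Y *m invmx W.
Proof.
move=> W_unit WYX; apply: (canLR (mulKmx W_unit)).
by rewrite mulmxA WYX -mulmxA mulmxV // mulmx1.
Qed.

Theorem proposition4p3 (F : closedFieldType) (Hchar : (2%:R : F) != 0)
    (a b c : F) (d : nat) :
  Rd_iso d a b c (- a - 1) b c /\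
  (Wmx a b c d \in unitmx /\
   forall i : nat, (i <= d)%N ->
     RA a b c d *m wvec a b c d i
       = theta a d (d - i) *: wvec a b c d i
         + (if (i < d)%N then wvec a b c d i.+1 else 0) /\
     RB a b c d *m wvec a b c d i
       = theta b d i *: wvec a b c d i
         + (if (0 < i)%N then phi a b c d i *: wvec a b c d i.-1 else 0)).
Proof.
have W_unit := Wmx_unit a b c d.
split.
  exists (invmx (Wmx a b c d)); rewrite unitmx_inv; split=> //;
    apply: invmx_intertwine => //.
  - exact: Wmx_RA.
  - exact: Wmx_RB.
  - exact: Wmx_RC.
  - exact: Wmx_RD.
split=> // i id; split.
  rewrite RA_wvec; case: ltnP => // di.
  by rewrite [wvec _ _ _ _ i.+1]wvec_eq0 //; lia.
by rewrite RB_wvec //; case: i id => [|i] _ //=; rewrite /phi !mul0r scale0r.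
Qed.
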